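(* Let $\bar\alpha$ be an affine infra-nilmanifold endomorphism of $\Gamma\backslash G$ induced by $\alpha\in\mathrm{Aff}(G)$, let $N=\Gamma\cap G$ be the Fitting subgroup of $\Gamma$, and let $p:N\backslash G\to\Gamma\backslash G$, $Nx\mapsto\Gamma x$, be the natural covering map. Then $\alpha N\alpha^{-1}\subseteq N$, so $\alpha$ induces an affine nilmanifold endomorphism $\tilde\alpha(Nx)=N\,{}^{\alpha}x$ of $N\backslash G$, which is a lift of $\bar\alpha$ (i.e. $p\circ\tilde\alpha=\bar\alpha\circ p$), and $$p^{-1}(\mathrm{ePer}(\bar\alpha))=\mathrm{ePer}(\tilde\alpha),\qquad p^{-1}(\mathrm{Per}(\bar\alpha))=\mathrm{Per}(\tilde\alpha).$$
   Context: $G$ is a connected, simply connected nilpotent Lie group, $\mathrm{Aff}(G)=G\rtimes\mathrm{Aut}(G)$ acting by ${}^{(g,\delta)}x=g\delta(x)$, with $G$ identified with pure translations. $\Gamma\le G\rtimes F$ ($F\le \mathrm{Aut}(G)$ finite) is a torsion-free discrete subgroup with $\Gamma\backslash G$ compact, and $\bar\alpha(\Gamma x)=\Gamma\,{}^\alpha x$ where $\alpha\Gamma\alpha^{-1}\subseteq\Gamma$. For a self-map $f$: $\mathrm{Per}(f)=\{x:\exists k>0, f^k(x)=x\}$, $\mathrm{ePer}(f)=\{x:\exists k>0, f^k(x)\in\mathrm{Per}(f)\}$. *)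

From Stdlib Require Import Arith List ClassicalEpsilon.
Set Implicit Arguments.

Record Group := {
  carrier :> Type;
  gmul : carrier -> carrier -> carrier;
  gone : carrier;
  ginv : carrier -> carrier;
  gmulA : forall x y z, gmul x (gmul y z) = gmul (gmul x y) z;
  gmul1 : forall x, gmul gone x = x;
  gmulV : forall x, gmul (ginv x) x = gone
}.

Section AffDefs.
Variable G : Group.

Definition is_aut (d : G -> G) : Prop :=
  (forall x y, d (gmul G x y) = gmul G (d x) (d y)) /\
  exists e : G -> G, (forall x, e (d x) = x) /\ (forall x, d (e x) = x).

(** Aff(G) = G ⋊ Aut(G); an element is a pair (g, δ) with δ an automorphism. *)
Definition Aff : Type := (G * (G -> G))%type.
Definition is_aff (a : Aff) : Prop := is_aut (snd a).

Definition aff_mul (a b : Aff) : Aff :=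
  (gmul G (fst a) (snd a (fst b)), fun x => snd a (snd b x)).
Definition aff_one : Aff := (gone G, fun x => x).
Definition aff_pow (a : Aff) (n : nat) : Aff := Nat.iter n (aff_mul a) aff_one.

Definition aff_act (a : Aff) (x : G) : G := gmul G (fst a) (snd a x).

(** N = Γ ∩ G, G identified with pure translations (g, id). *)
Definition transl_part (Gam : Aff -> Prop) : Aff -> Prop :=
  fun a => Gam a /\ snd a = (fun x => x).

(** Orbit space H\G of a set H ⊆ Aff(G) acting on G, as a type of classes. *)
Definition cls (H : Aff -> Prop) (x : G) : G -> Prop :=
  fun y => exists h, H h /\ y = aff_act h x.
Definition Quot (H : Aff -> Prop) : Type :=
  { C : G -> Prop | exists x, C = cls H x }.
Definition qpt (H : Aff -> Prop) (x : G) : Quot H :=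
  exist _ (cls H x) (ex_intro _ x eq_refl).
Definition rep (H : Aff -> Prop) (C : Quot H) : G :=
  proj1_sig (constructive_indefinite_description _ (proj2_sig C)).

(** induced map  H x ↦ H ^{a}x  (well defined when a H a^{-1} ⊆ H) *)
Definition induced (H : Aff -> Prop) (a : Aff) (C : Quot H) : Quot H :=
  qpt H (aff_act a (rep C)).

Definition proj_cov (H K : Aff -> Prop) (C : Quot K) : Quot H :=
  qpt H (rep C).
End AffDefs.
Arguments is_aut {G} d.
Arguments is_aff {G} a.
Arguments aff_one {G}.
Arguments transl_part {G} Gam.
Arguments induced {G} H a C.
Arguments proj_cov {G} H {K} C.

Definition Per {X : Type} (f : X -> X) (x : X) : Prop :=
  exists k, 0 < k /\ Nat.iter k f x = x.
Definition ePer {X : Type} (f : X -> X) (x : X) : Prop :=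
  exists k, 0 < k /\ Per f (Nat.iter k f x).

(** The only obstruction to lifting a periodic point of the induced map on
    [Γ\G] to one on [N\G] is the finite holonomy.  If [Γ α^k x = Γ x], say
    [α^k x = γ x], then every [α^{kn} x] has the form [γ_n x] with [γ_n ∈ Γ],
    and the linear part of [γ_{n+1}] is obtained from that of [γ_n] by a fixed
    injective map (conjugation by [α^k] followed by composition with the linear
    part of [γ]).  All these linear parts lie in the finite group [F], so the
    orbit of the identity under this injective map returns to the identity:
    some [γ_m] with [m > 0] is a pure translation, i.e. lies in [N], and then
    [N α^{km} x = N x].  Eventual periodicity follows from periodicity, since
    [p] semiconjugates the two induced maps. *)

From Stdlib Require Import Arith List Lia Classical ClassicalEpsilon
  FunctionalExtensionality PropExtensionality ProofIrrelevance.

Lemma exists_repeat_of_finite_range (T : Type) (s : nat -> T) (l : list T) :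
  (forall n, In (s n) l) -> exists i j, i < j /\ s i = s j.
Proof.
  intro s_in_l; apply NNPP; intro no_repeat.
  assert (s_inj : forall i j, s i = s j -> i = j).
  { intros i j Eij; destruct (Nat.lt_total i j) as [lt_ij | [-> | lt_ji]]; auto;
      exfalso; apply no_repeat; eauto. }
  assert (nodup_s : NoDup (map s (seq 0 (S (length l))))).
  { apply NoDup_map_NoDup_ForallPairs; [intros i j _ _; apply s_inj | apply seq_NoDup]. }
  assert (incl_s : incl (map s (seq 0 (S (length l)))) l).
  { intros y (n & <- & _)%in_map_iff; apply s_in_l. }
  pose proof (NoDup_incl_length nodup_s incl_s) as len_le.
  rewrite length_map, length_seq in len_le; lia.
Qed.

Lemma iter_injective_periodic (T : Type) (f : T -> T) (l : list T) (z : T) :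
  (forall u v, f u = f v -> u = v) -> (forall n, In (Nat.iter n f z) l) ->
  exists m, 0 < m /\ Nat.iter m f z = z.
Proof.
  intros f_inj orbit_in_l.
  destruct (exists_repeat_of_finite_range _ _ _ orbit_in_l) as (i & j & lt_ij & Eij).
  exists (j - i); split; [lia |].
  replace j with (i + (j - i)) in Eij by lia; rewrite Nat.iter_add in Eij.
  assert (iter_inj : forall n u v, Nat.iter n f u = Nat.iter n f v -> u = v).
  { intro n; induction n as [| n IHn]; intros u v Euv; [exact Euv | apply IHn, f_inj, Euv]. }
  symmetry; exact (iter_inj _ _ _ Eij).
Qed.

Lemma iter_iter (T : Type) (f : T -> T) (m k : nat) (x : T) :
  Nat.iter m (Nat.iter k f) x = Nat.iter (m * k) f x.
Proof.
  induction m as [| m IHm]; [reflexivity |].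
  now rewrite Nat.mul_succ_l, Nat.add_comm, Nat.iter_add, <- IHm.
Qed.

Section Semiconjugacy.
Variables (X Y : Type) (f : X -> X) (g : Y -> Y) (p : X -> Y).
Hypothesis p_semiconj : forall c, p (f c) = g (p c).

Lemma iter_semiconj (k : nat) (c : X) : p (Nat.iter k f c) = Nat.iter k g (p c).
Proof. now apply Nat.iter_swap_gen. Qed.

Lemma Per_semiconj (c : X) : Per f c -> Per g (p c).
Proof. intros (k & k_pos & Ek); exists k; split; [| rewrite <- iter_semiconj, Ek]; auto. Qed.

Lemma ePer_semiconj_iff :
  (forall c, Per g (p c) -> Per f c) -> forall c, ePer g (p c) <-> ePer f c.
Proof.
  intros Per_reflect c; split; intros (k & k_pos & Pk); exists k; split; auto.
  - apply Per_reflect; now rewrite iter_semiconj.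
  - rewrite <- iter_semiconj; now apply Per_semiconj.
Qed.
End Semiconjugacy.

Section AffineGroup.
Context {G : Group}.

Definition is_hom (d : G -> G) : Prop := forall x y, d (gmul G x y) = gmul G (d x) (d y).

Lemma gmulV_r (x : G) : gmul G x (ginv G x) = gone G.
Proof.
  transitivity (gmul G (gmul G (ginv G (ginv G x)) (ginv G x)) (gmul G x (ginv G x))).
  - now rewrite gmulV, gmul1.
  - now rewrite <- gmulA, (gmulA _ (ginv G x) x), gmulV, gmul1, gmulV.
Qed.

Lemma gmul1_r (x : G) : gmul G x (gone G) = x.
Proof. now rewrite <- (gmulV _ x), gmulA, gmulV_r, gmul1. Qed.

Lemma hom_one (d : G -> G) : is_hom d -> d (gone G) = gone G.
Proof.
  intro d_hom.
  assert (idem : d (gone G) = gmul G (d (gone G)) (d (gone G))) by now rewrite <- d_hom, gmul1.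
  transitivity (gmul G (gmul G (ginv G (d (gone G))) (d (gone G))) (d (gone G))).
  - now rewrite gmulV, gmul1.
  - now rewrite <- gmulA, <- idem, gmulV.
Qed.

Lemma is_aut_id : is_aut (fun x : G => x).
Proof. split; [reflexivity | exists (fun x => x); auto]. Qed.

Lemma is_aut_comp (d e : G -> G) : is_aut d -> is_aut e -> is_aut (fun x => d (e x)).
Proof.
  intros (d_hom & d' & d'd & dd') (e_hom & e' & e'e & ee'); split.
  - intros x y; now rewrite e_hom, d_hom.
  - exists (fun x => e' (d' x)); split; intro x; [now rewrite d'd | now rewrite ee'].
Qed.

Lemma aff_act_one (x : G) : aff_act aff_one x = x.
Proof. apply gmul1. Qed.

Lemma aff_act_mul (a b : Aff G) (x : G) :
  is_hom (snd a) -> aff_act (aff_mul a b) x = aff_act a (aff_act b x).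
Proof. intro a_hom; unfold aff_act, aff_mul; simpl; now rewrite a_hom, gmulA. Qed.

Lemma aff_mulA (a b c : Aff G) :
  is_hom (snd a) -> aff_mul a (aff_mul b c) = aff_mul (aff_mul a b) c.
Proof. intro a_hom; unfold aff_mul; simpl; now rewrite a_hom, gmulA. Qed.

Lemma is_aut_aff_pow (a : Aff G) (n : nat) : is_aff a -> is_aff (aff_pow a n).
Proof.
  intro a_aut; induction n as [| n IHn]; [apply is_aut_id | exact (is_aut_comp _ _ a_aut IHn)].
Qed.

Lemma aff_act_pow (a : Aff G) (n : nat) (x : G) :
  is_hom (snd a) -> aff_act (aff_pow a n) x = Nat.iter n (aff_act a) x.
Proof.
  intro a_hom; induction n as [| n IHn]; [apply aff_act_one |].
  simpl; now rewrite aff_act_mul, IHn.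
Qed.

(** [a H a^{-1} ⊆ H], stated without inverses in [Aff G]. *)
Definition normalizes (a : Aff G) (H : Aff G -> Prop) : Prop :=
  forall h, H h -> exists h', H h' /\ aff_mul a h = aff_mul h' a.

Lemma snd_conjugate (a h h' : Aff G) (a_inv : G -> G) (y : G) :
  (forall y, snd a (a_inv y) = y) -> aff_mul a h = aff_mul h' a ->
  snd h' y = snd a (snd h (a_inv y)).
Proof.
  intros a_inv_r E; apply (f_equal (fun b => snd b (a_inv y))) in E; simpl in E.
  now rewrite E, a_inv_r.
Qed.

Lemma normalizes_transl_part (H : Aff G -> Prop) (a : Aff G) :
  is_aff a -> normalizes a H -> normalizes a (transl_part H).
Proof.
  intros (_ & a_inv & _ & a_inv_r) a_norm h [Hh Eh].
  destruct (a_norm h Hh) as (h' & Hh' & E); exists h'; repeat split; auto.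
  apply functional_extensionality; intro y; now rewrite (snd_conjugate _ _ _ a_inv y a_inv_r E), Eh.
Qed.

Record acting_subgroup (H : Aff G -> Prop) : Prop := {
  sub_one : H aff_one;
  sub_mul : forall a b, H a -> H b -> H (aff_mul a b);
  sub_inv : forall a, H a -> exists b, H b /\ aff_mul b a = aff_one;
  sub_aut : forall a, H a -> is_aff a
}.
Arguments sub_one {H}.
Arguments sub_mul {H}.
Arguments sub_inv {H}.
Arguments sub_aut {H}.

Section Orbits.
Context {H : Aff G -> Prop} (H_sub : acting_subgroup H).

Lemma sub_hom (h : Aff G) : H h -> is_hom (snd h).
Proof. intro Hh; exact (proj1 (sub_aut H_sub h Hh)). Qed.

Lemma normalizes_pow (a : Aff G) (n : nat) :
  is_aff a -> normalizes a H -> normalizes (aff_pow a n) H.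
Proof.
  intros a_aut a_norm; induction n as [| n IHn]; intros h Hh.
  - exists h; split; auto; unfold aff_mul; simpl.
    now rewrite gmul1, hom_one, gmul1_r by now apply sub_hom.
  - destruct (IHn h Hh) as (h1 & Hh1 & E1); destruct (a_norm h1 Hh1) as (h2 & Hh2 & E2).
    exists h2; split; auto; simpl.
    rewrite <- (aff_mulA _ _ _ (proj1 a_aut)), E1, (aff_mulA _ _ _ (proj1 a_aut)), E2.
    now rewrite <- (aff_mulA _ _ _ (sub_hom _ Hh2)).
Qed.

Lemma cls_refl (x : G) : cls H x x.
Proof. exists aff_one; split; [apply (sub_one H_sub) | symmetry; apply aff_act_one]. Qed.

Lemma cls_sym (x y : G) : cls H x y -> cls H y x.
Proof.
  intros (h & Hh & ->); destruct (sub_inv H_sub h Hh) as (b & Hb & Ebh).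
  exists b; split; auto; now rewrite <- aff_act_mul, Ebh, aff_act_one by now apply sub_hom.
Qed.

Lemma cls_trans (x y z : G) : cls H x y -> cls H y z -> cls H x z.
Proof.
  intros (h & Hh & ->) (h' & Hh' & ->).
  exists (aff_mul h' h); split; [now apply (sub_mul H_sub) | now rewrite aff_act_mul by now apply sub_hom].
Qed.

Lemma qpt_eq (x y : G) : cls H x y -> qpt H x = qpt H y.
Proof.
  intro Exy; apply eq_sig_hprop; [intros; apply proof_irrelevance |]; simpl.
  apply functional_extensionality; intro z; apply propositional_extensionality.
  split; intro E; eapply cls_trans; eauto; now apply cls_sym.
Qed.

Lemma cls_of_qpt_eq (x y : G) : qpt H x = qpt H y -> cls H x y.
Proof. intro E; change (proj1_sig (qpt H x) y); rewrite E; apply cls_refl. Qed.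

Lemma qpt_rep (C : Quot H) : qpt H (rep C) = C.
Proof.
  apply eq_sig_hprop; [intros; apply proof_irrelevance |]; simpl; unfold rep.
  now destruct (constructive_indefinite_description _ _).
Qed.

Lemma cls_rep (x : G) : cls H x (rep (qpt H x)).
Proof. apply cls_of_qpt_eq; now rewrite qpt_rep. Qed.

Lemma induced_qpt (a : Aff G) (x : G) :
  is_aff a -> normalizes a H -> induced H a (qpt H x) = qpt H (aff_act a x).
Proof.
  intros a_aut a_norm; unfold induced; apply qpt_eq, cls_sym.
  destruct (cls_rep x) as (h & Hh & ->); destruct (a_norm h Hh) as (h' & Hh' & E).
  exists h'; split; auto.
  rewrite <- (aff_act_mul _ _ _ (proj1 a_aut)), E.
  exact (aff_act_mul _ _ _ (sub_hom _ Hh')).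
Qed.

Lemma iter_induced_qpt (a : Aff G) (n : nat) (x : G) :
  is_aff a -> normalizes a H ->
  Nat.iter n (induced H a) (qpt H x) = qpt H (Nat.iter n (aff_act a) x).
Proof.
  intros a_aut a_norm; induction n as [| n IHn]; [reflexivity |].
  simpl; rewrite IHn; now apply induced_qpt.
Qed.

Lemma transl_part_acting_subgroup : acting_subgroup (transl_part H).
Proof.
  split.
  - split; [apply (sub_one H_sub) | reflexivity].
  - intros a b [Ha Ea] [Hb Eb]; split; [now apply (sub_mul H_sub) |].
    unfold aff_mul; simpl; now rewrite Ea, Eb.
  - intros a [Ha Ea]; destruct (sub_inv H_sub a Ha) as (b & Hb & Eba).
    exists b; repeat split; auto.
    apply (f_equal snd) in Eba; unfold aff_mul in Eba; simpl in Eba; now rewrite Ea in Eba.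
  - intros a [_ Ea]; unfold is_aff; rewrite Ea; apply is_aut_id.
Qed.

Lemma orbit_returns_to_translation (a h0 : Aff G) (x : G) :
  (exists l, forall h, H h -> In (snd h) l) -> is_aff a -> normalizes a H ->
  H h0 -> aff_act a x = aff_act h0 x ->
  exists m t, 0 < m /\ transl_part H t /\ Nat.iter m (aff_act a) x = aff_act t x.
Proof.
  intros (l & lin_in_l) (a_hom & a_inv & a_inv_l & a_inv_r) a_norm Hh0 Eh0.
  destruct (sub_aut H_sub h0 Hh0) as (_ & h0_inv & _ & h0_inv_r).
  (* the linear part of [γ_{n+1}] in terms of that of [γ_n] *)
  set (step := fun (d : G -> G) y => snd a (d (a_inv (snd h0 y)))).
  assert (orbit : forall n, exists h, H h /\ Nat.iter n (aff_act a) x = aff_act h x /\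
                                      snd h = Nat.iter n step (fun y => y)).
  { induction n as [| n (h & Hh & Eh & Sh)].
    - exists aff_one; repeat split; [apply (sub_one H_sub) | symmetry; apply aff_act_one].
    - destruct (a_norm h Hh) as (h' & Hh' & E).
      exists (aff_mul h' h0); repeat split; [now apply (sub_mul H_sub) | |].
      + simpl; rewrite Eh, <- (aff_act_mul _ _ _ a_hom), E, (aff_act_mul _ _ _ (sub_hom _ Hh')), Eh0.
        symmetry; exact (aff_act_mul _ _ _ (sub_hom _ Hh')).
      + simpl; rewrite <- Sh; apply functional_extensionality; intro y.
        exact (snd_conjugate _ _ _ _ _ a_inv_r E). }
  assert (step_inj : forall u v, step u = step v -> u = v).
  { intros u v Euv; apply functional_extensionality; intro z.
    apply (f_equal (fun f => a_inv (f (h0_inv (snd a z))))) in Euv; unfold step in Euv.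
    now rewrite h0_inv_r, !a_inv_l in Euv. }
  destruct (iter_injective_periodic _ step l (fun y => y) step_inj) as (m & m_pos & Em).
  { intro n; destruct (orbit n) as (h & Hh & _ & Sh); rewrite <- Sh; now apply lin_in_l. }
  destruct (orbit m) as (h & Hh & Eh & Sh); exists m, h; repeat split; auto; now rewrite Sh.
Qed.
End Orbits.

Lemma proj_cov_qpt (H K : Aff G -> Prop) (x : G) :
  acting_subgroup H -> acting_subgroup K -> (forall k, K k -> H k) ->
  proj_cov H (qpt K x) = qpt H x.
Proof.
  intros H_sub K_sub K_in_H; apply (qpt_eq H_sub), (cls_sym H_sub).
  destruct (cls_rep K_sub x) as (k & Kk & Ek); exists k; auto.
Qed.

Lemma Per_lift (H : Aff G -> Prop) (a : Aff G) (x : G) :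
  acting_subgroup H -> (exists l, forall h, H h -> In (snd h) l) ->
  is_aff a -> normalizes a H ->
  Per (induced H a) (qpt H x) -> Per (induced (transl_part H) a) (qpt (transl_part H) x).
Proof.
  intros H_sub lin_fin a_aut a_norm (k & k_pos & Ek).
  rewrite (iter_induced_qpt H_sub _ _ _ a_aut a_norm) in Ek.
  destruct (cls_sym H_sub _ _ (cls_of_qpt_eq H_sub _ _ Ek)) as (h0 & Hh0 & Eh0).
  assert (iter_pow : aff_act (aff_pow a k) = Nat.iter k (aff_act a)).
  { apply functional_extensionality; intro y; exact (aff_act_pow _ _ _ (proj1 a_aut)). }
  destruct (orbit_returns_to_translation H_sub (aff_pow a k) h0 x lin_fin
              (is_aut_aff_pow _ _ a_aut) (normalizes_pow H_sub _ _ a_aut a_norm) Hh0)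
    as (m & t & m_pos & Nt & Et); [now rewrite iter_pow |].
  exists (m * k); split; [nia |].
  rewrite (iter_induced_qpt (transl_part_acting_subgroup H_sub) _ _ _ a_aut
             (normalizes_transl_part _ _ a_aut a_norm)), <- iter_iter, <- iter_pow, Et.
  symmetry; apply (qpt_eq (transl_part_acting_subgroup H_sub)); now exists t.
Qed.
End AffineGroup.

Theorem mainTheorem8
  (G : Group)
  (F : (G -> G) -> Prop)
  (Gam : Aff G -> Prop)
  (alpha : Aff G)
  (hF_aut : forall d, F d -> is_aut d)
  (hF_one : F (fun x => x))
  (hF_mul : forall d e, F d -> F e -> F (fun x => d (e x)))
  (hF_inv : forall d, F d -> exists e, F e /\
              (forall x, e (d x) = x) /\ (forall x, d (e x) = x))
  (hF_fin : exists l : list (G -> G), forall d, F d -> In d l)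
  (hGam_F : forall a, Gam a -> F (snd a))
  (hGam_one : Gam (aff_one))
  (hGam_mul : forall a b, Gam a -> Gam b -> Gam (aff_mul a b))
  (hGam_inv : forall a, Gam a -> exists b, Gam b /\
                aff_mul b a = aff_one /\ aff_mul a b = aff_one)
  (hGam_tf : forall a n, Gam a -> 0 < n -> aff_pow a n = aff_one -> a = aff_one)
  (halpha : is_aff alpha)
  (halphaGam : forall g, Gam g -> exists g', Gam g' /\ aff_mul alpha g = aff_mul g' alpha) :
  let N := transl_part Gam in
  let p := @proj_cov G Gam N in
  let abar := induced Gam alpha in
  let atil := induced N alpha in
  (forall n, N n -> exists n', N n' /\ aff_mul alpha n = aff_mul n' alpha) /\
  (forall c, p (atil c) = abar (p c)) /\
  (forall c, ePer abar (p c) <-> ePer atil c) /\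
  (forall c, Per abar (p c) <-> Per atil c).
Proof.
  intros N p abar atil.
  assert (Gam_sub : acting_subgroup Gam).
  { split; auto.
    - intros a Ha; destruct (hGam_inv a Ha) as (b & Hb & Eba & _); eauto.
    - intros a Ha; exact (hF_aut _ (hGam_F a Ha)). }
  assert (lin_fin : exists l, forall h, Gam h -> In (snd h) l).
  { destruct hF_fin as (l & Hl); exists l; auto. }
  pose proof (transl_part_acting_subgroup Gam_sub) as N_sub.
  pose proof (normalizes_transl_part _ _ halpha halphaGam) as N_norm.
  assert (lift : forall c, p (atil c) = abar (p c)).
  { intro c; rewrite <- (qpt_rep c); unfold p, atil, abar.
    rewrite (induced_qpt N_sub), !(proj_cov_qpt _ _ _ Gam_sub N_sub), (induced_qpt Gam_sub);
      auto; now intros k [Hk _]. }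
  assert (Per_iff : forall c, Per abar (p c) <-> Per atil c).
  { intro c; split; [| apply (Per_semiconj _ _ _ _ _ lift)].
    rewrite <- (qpt_rep c); unfold p; rewrite (proj_cov_qpt _ _ _ Gam_sub N_sub).
    - now apply Per_lift.
    - now intros k [Hk _]. }
  split; [exact N_norm |]; split; [exact lift |]; split; [| exact Per_iff].
  apply (ePer_semiconj_iff _ _ _ _ _ lift); intro c; apply Per_iff.
Qed.
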